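(* Let $\mathfrak G$ be a Grassmann semialgebra over a commutative semiring $\mathcal A$ and an $\mathcal A$-module $V$. For any finitely many $\alpha_i\in\mathcal A$ and $a_i\in V$, $$\Bigl(\sum_i\alpha_ia_i\Bigr)^2\succeq_\circ\sum_i\alpha_i^2a_i^2 .$$
   Context: A Grassmann (exterior) semialgebra over $\mathcal A$ and $V$ is an associative $\mathcal A$-semialgebra $\mathfrak G$ (product written $\wedge$, $x^2=x\wedge x$) generated by $\mathcal A$ and $V$; $\mathfrak G_{\ge2}$ is the submodule generated by products of at least two elements of $V$; it carries a negation map $(-)$ on $\mathfrak G_{\ge2}$ (an additive bijection of order $\le2$ commuting with scalars) with $v_1\wedge v_2=(-)(v_2\wedge v_1)$ for all $v_1,v_2\in V$. A quasi-zero is an element $a+((-)a)$, and $a_1\succeq_\circ a_0$ means $a_1=a_0+d$ with $d$ a quasi-zero. *)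

From HB Require Import structures.
From mathcomp Require Import all_boot all_order all_algebra.
Set Implicit Arguments. Unset Strict Implicit. Unset Printing Implicit Defensive.
Import Order.TTheory GRing.Theory Num.Theory.
Local Open Scope ring_scope.

Section Grassmann.
Variables (A : comPzSemiRingType) (G : semiAlgType A).

Definition is_submodule (V : G -> Prop) : Prop :=
  [/\ V 0, (forall x y, V x -> V y -> V (x + y)) &
      (forall (c : A) x, V x -> V (c *: x))].

Inductive gen_by (V : G -> Prop) : G -> Prop :=
  | gen_scal (c : A) : gen_by V (c%:A)
  | gen_V v : V v -> gen_by V v
  | gen_add x y : gen_by V x -> gen_by V y -> gen_by V (x + y)
  | gen_mul x y : gen_by V x -> gen_by V y -> gen_by V (x * y)
  | gen_scale (c : A) x : gen_by V x -> gen_by V (c *: x).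

Definition generates (V : G -> Prop) : Prop := forall x : G, gen_by V x.

Inductive G_ge2 (V : G -> Prop) : G -> Prop :=
  | ge2_prod (s : seq G) : (2 <= size s)%N -> (forall v, v \in s -> V v) ->
                           G_ge2 V (\prod_(v <- s) v)
  | ge2_zero : G_ge2 V 0
  | ge2_add x y : G_ge2 V x -> G_ge2 V y -> G_ge2 V (x + y)
  | ge2_scale (c : A) x : G_ge2 V x -> G_ge2 V (c *: x).

(* neg is a negation map on G_{>=2}: an additive map G_{>=2} -> G_{>=2},
   of order <= 2 (hence a bijection of G_{>=2}), commuting with scalars,
   with v1 * v2 = (-)(v2 * v1) for v1, v2 in V. *)
Definition negation_map (V : G -> Prop) (neg : G -> G) : Prop :=
  (forall x, G_ge2 V x -> G_ge2 V (neg x)) /\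
  neg 0 = 0 /\
  (forall x y, G_ge2 V x -> G_ge2 V y -> neg (x + y) = neg x + neg y) /\
  (forall x, G_ge2 V x -> neg (neg x) = x) /\
  (forall (c : A) x, G_ge2 V x -> neg (c *: x) = c *: neg x) /\
  (forall v1 v2, V v1 -> V v2 -> v1 * v2 = neg (v2 * v1)).

Definition quasi_zero (V : G -> Prop) (neg : G -> G) (d : G) : Prop :=
  exists2 b, G_ge2 V b & d = b + neg b.

Definition succeq_circ (V : G -> Prop) (neg : G -> G) (a1 a0 : G) : Prop :=
  exists2 d, quasi_zero V neg d & a1 = a0 + d.

End Grassmann.

From HB Require Import structures.
From mathcomp Require Import all_boot all_order all_algebra.
Import GRing.Theory.
Local Open Scope ring_scope.

(* Expanding the square of a sum [x + s] gives [x^2 + s^2 + (x s + s x)], and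
   for [x, s] in [V] the cross term [x s + s x = x s + (-)(x s)] is a
   quasi-zero.  Quasi-zeros are closed under addition, so by induction on the
   number of summands the cross terms of all the partial sums accumulate into
   one quasi-zero. *)

Lemma sqrrD_noncomm (R : pzSemiRingType) (x y : R) :
  (x + y) ^+ 2 = x ^+ 2 + y ^+ 2 + (x * y + y * x).
Proof.
rewrite !expr2 mulrDl !mulrDr -!addrA; congr (_ + _).
by rewrite [RHS]addrC -addrA.
Qed.

Section QuasiZero.
Variables (A : comPzSemiRingType) (G : semiAlgType A).
Variables (V : G -> Prop) (neg : G -> G).

Lemma G_ge2_mul (u v : G) : V u -> V v -> G_ge2 V (u * v).
Proof.
move=> Vu Vv; have := @ge2_prod A G V [:: u; v] isT.
rewrite !big_cons big_nil mulr1; apply=> w.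
by rewrite !inE => /orP[] /eqP->.
Qed.

Lemma submodule_sum (I : Type) (r : seq I) (F : I -> G) :
  is_submodule V -> (forall i, V (F i)) -> V (\sum_(i <- r) F i).
Proof. by case=> V0 VD _ VF; elim/big_ind: _. Qed.

Hypothesis neg0 : neg 0 = 0.
Hypothesis negD :
  forall x y, G_ge2 V x -> G_ge2 V y -> neg (x + y) = neg x + neg y.

Lemma quasi_zero0 : quasi_zero V neg 0.
Proof. by exists 0; [exact: ge2_zero | rewrite neg0 addr0]. Qed.

Lemma quasi_zeroD (d1 d2 : G) :
  quasi_zero V neg d1 -> quasi_zero V neg d2 -> quasi_zero V neg (d1 + d2).
Proof.
case=> b1 Gb1 ->; case=> b2 Gb2 ->.
exists (b1 + b2); first exact: ge2_add.
by rewrite negD // addrACA.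
Qed.

Lemma succeq_circ_refl (a : G) : succeq_circ V neg a a.
Proof. by exists 0; [exact: quasi_zero0 | rewrite addr0]. Qed.

Lemma succeq_circD (a1 a0 b1 b0 : G) :
  succeq_circ V neg a1 a0 -> succeq_circ V neg b1 b0 ->
  succeq_circ V neg (a1 + b1) (a0 + b0).
Proof.
case=> d qd ->; case=> e qe ->.
by exists (d + e); [exact: quasi_zeroD | rewrite addrACA].
Qed.

Lemma succeq_circ_quasi_zeroD (a1 a0 d : G) :
  succeq_circ V neg a1 a0 -> quasi_zero V neg d ->
  succeq_circ V neg (a1 + d) a0.
Proof.
case=> e qe -> qd.
by exists (e + d); [exact: quasi_zeroD | rewrite addrA].
Qed.

Hypothesis anticomm : forall v1 v2, V v1 -> V v2 -> v1 * v2 = neg (v2 * v1).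

Lemma quasi_zero_anticomm (u v : G) :
  V u -> V v -> quasi_zero V neg (u * v + v * u).
Proof.
by move=> Vu Vv; exists (u * v); [exact: G_ge2_mul | rewrite (anticomm _ _ Vv Vu)].
Qed.

Lemma sqr_sum_succeq_circ (I : Type) (r : seq I) (alpha : I -> A) (a : I -> G) :
  is_submodule V -> (forall i, V (a i)) ->
  succeq_circ V neg ((\sum_(i <- r) alpha i *: a i) ^+ 2)
                    (\sum_(i <- r) (alpha i ^+ 2) *: (a i ^+ 2)).
Proof.
move=> hV Va; have [_ _ VZ] := hV.
elim: r => [|i r IH]; first by rewrite !big_nil expr2 mulr0; exact: succeq_circ_refl.
rewrite !big_cons sqrrD_noncomm -exprZn.
apply: succeq_circ_quasi_zeroD; first exact: succeq_circD (succeq_circ_refl _) IH.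
apply: quasi_zero_anticomm; first exact: VZ.
by apply: submodule_sum => // j; apply: VZ.
Qed.

End QuasiZero.

Theorem mainTheorem8 (A : comPzSemiRingType) (G : semiAlgType A)
  (V : G -> Prop) (neg : G -> G)
  (hV : is_submodule V) (hgen : generates V) (hneg : negation_map V neg)
  (n : nat) (alpha : 'I_n -> A) (a : 'I_n -> G) (ha : forall i, V (a i)) :
  succeq_circ V neg ((\sum_(i < n) alpha i *: a i) ^+ 2)
                    (\sum_(i < n) (alpha i ^+ 2) *: (a i ^+ 2)).
Proof.
have [_ [neg0 [negD [_ [_ anticomm]]]]] := hneg.
exact: sqr_sum_succeq_circ.
Qed.
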